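(* Consider the averaged buck-boost converter $-L\dot I=(1-u)V-uV_s$, $C\dot V=(1-u)I-GV$ with scalar constants $L>0$, $C>0$, $G\ge0$, $V_s\in\mathbb{R}$, extended by $\dot u=\upsilon$. Then this system is passive with respect to the storage function $S=\tfrac12L\dot I^2+\tfrac12C\dot V^2$ and the port-variables $\dot u$ and $y=\dot IV-\dot VI+V_s\dot I$, i.e. $\dot S\le\dot u\,y$.
   Context: $I$ is the inductor current, $V$ the capacitor voltage, $u\in[0,1]$ the duty cycle (averaged model). *)

From Stdlib Require Import Reals.
From Coquelicot Require Import Coquelicot.
Open Scope R_scope.

Definition storage (L C : R) (dI dV : R -> R) (t : R) : R :=
  / 2 * L * (dI t) ^ 2 + / 2 * C * (dV t) ^ 2.

Definition port_output (Vs : R) (I V dI dV : R -> R) (t : R) : R :=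
  dI t * V t - dV t * I t + Vs * dI t.

(** Differentiating the constitutive equations gives the dynamics of the rates
    [dI], [dV]: [-L dI' = (1 - u) dV - du (V + Vs)] and
    [C dV' = (1 - u) dI - du I - G dV].  In [S' = L dI dI' + C dV dV'] the
    cross terms [(1 - u) dI dV] cancel, leaving the power balance
    [S' = du y - G dV^2], and the conductance term only dissipates. *)

From Stdlib Require Import Reals Lra.
From Coquelicot Require Import Coquelicot.
Open Scope R_scope.

Lemma is_derive_eq (f : R -> R) (x l l' : R) :
  is_derive f x l -> l = l' -> is_derive f x l'.
Proof. intros H <-. exact H. Qed.

(* [auto_derive] leaves eta-expanded [Derive (fun s => f s)] terms over [R],
   which [is_derive_unique] (stated over [R_AbsRing]) does not rewrite. *)
Lemma is_derive_unique_eta (f : R -> R) (x l : R) :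
  is_derive f x l -> Derive (fun s => f s) x = l.
Proof. exact (is_derive_unique f x l). Qed.

Lemma is_derive_switched_rate (k : R) (x u a b : R -> R) (t du da db : R) :
  k <> 0 -> (forall s, k * x s = (1 - u s) * a s - b s) ->
  is_derive u t du -> is_derive a t da -> is_derive b t db ->
  is_derive x t (((1 - u t) * da - du * a t - db) / k).
Proof.
  intros hk eqx Hu Ha Hb.
  assert (solved : forall s, x s = ((1 - u s) * a s - b s) / k).
  { intro s. rewrite <- eqx. field. exact hk. }
  apply (is_derive_ext (fun s => ((1 - u s) * a s - b s) / k)).
  { intro s. now rewrite solved. }
  auto_derive.
  - repeat split; eexists; eassumption.
  - rewrite (is_derive_unique_eta u _ _ Hu),
      (is_derive_unique_eta a _ _ Ha),
      (is_derive_unique_eta b _ _ Hb).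
    field. exact hk.
Qed.

Lemma is_derive_storage (L C : R) (dI dV : R -> R) (t ddI ddV : R) :
  is_derive dI t ddI -> is_derive dV t ddV ->
  is_derive (storage L C dI dV) t (L * dI t * ddI + C * dV t * ddV).
Proof.
  intros HI HV. unfold storage.
  auto_derive.
  - repeat split; eexists; eassumption.
  - rewrite (is_derive_unique_eta dI _ _ HI),
      (is_derive_unique_eta dV _ _ HV).
    field.
Qed.

Section BuckBoost.

Variables (L C G Vs : R) (I V u dI dV du : R -> R).
Hypotheses (hL : 0 < L) (hC : 0 < C).
Hypotheses (hI : forall t, is_derive I t (dI t))
  (hV : forall t, is_derive V t (dV t))
  (hu : forall t, is_derive u t (du t)).
Hypotheses (eqI : forall t, - L * dI t = (1 - u t) * V t - u t * Vs)
  (eqV : forall t, C * dV t = (1 - u t) * I t - G * V t).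

Lemma is_derive_current_rate (t : R) :
  is_derive dI t (((1 - u t) * dV t - du t * V t - du t * Vs) / - L).
Proof.
  apply (is_derive_switched_rate (- L) dI u V (fun s => u s * Vs)).
  - lra.
  - exact eqI.
  - apply hu.
  - apply hV.
  - apply (is_derive_ext (fun s => Vs * u s)).
    { intro s. apply Rmult_comm. }
    rewrite Rmult_comm. apply is_derive_scal, hu.
Qed.

Lemma is_derive_voltage_rate (t : R) :
  is_derive dV t (((1 - u t) * dI t - du t * I t - G * dV t) / C).
Proof.
  apply (is_derive_switched_rate C dV u I (fun s => G * V s)).
  - lra.
  - exact eqV.
  - apply hu.
  - apply hI.
  - apply is_derive_scal, hV.
Qed.

Lemma storage_power_balance (t : R) :
  is_derive (storage L C dI dV) t
    (du t * port_output Vs I V dI dV t - G * dV t ^ 2).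
Proof.
  apply (is_derive_eq _ _ _ _
    (is_derive_storage L C dI dV t _ _
       (is_derive_current_rate t) (is_derive_voltage_rate t))).
  unfold port_output. field. lra.
Qed.

End BuckBoost.

Theorem lemma5 (L C G Vs : R) (I V u dI dV du : R -> R)
  (hL : 0 < L) (hC : 0 < C) (hG : 0 <= G)
  (hI : forall t, is_derive I t (dI t))
  (hV : forall t, is_derive V t (dV t))
  (hu : forall t, is_derive u t (du t))
  (eqI : forall t, - L * dI t = (1 - u t) * V t - u t * Vs)
  (eqV : forall t, C * dV t = (1 - u t) * I t - G * V t) :
  forall t, ex_derive (storage L C dI dV) t /\
    Derive (storage L C dI dV) t <= du t * port_output Vs I V dI dV t.
Proof.
  intro t.
  pose proof (storage_power_balance L C G Vs I V u dI dV du
                hL hC hI hV hu eqI eqV t) as balance.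
  split.
  - eexists. exact balance.
  - rewrite (is_derive_unique _ _ _ balance).
    assert (0 <= G * dV t ^ 2) by (apply Rmult_le_pos; [exact hG | apply pow2_ge_0]).
    lra.
Qed.
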